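(* The short exact sequence $1\to\mathrm{Sym}(Z)\to\tilde QV\xrightarrow{\pi} V\to 1$ splits.
   Context: Let $\{0,1\}^*$ be the finite words over $\{0,1\}$, the vertices of the rooted binary tree in which $x$ has children $x0$ and $x1$ (two edge colours), and let $Z=\{0,1\}^*\cup\{\zeta\}$ with $\zeta$ an extra isolated vertex. $\tilde QV$ is the group of bijections $\tau$ of $Z$ with $\tau(x0)=\tau(x)0$ and $\tau(x1)=\tau(x)1$ for all but finitely many $x\in\{0,1\}^*$. Each such $\tau$ induces a homeomorphism $\pi(\tau)$ of $\{0,1\}^{\mathbb N}$ by $\pi(\tau)(\ell\omega)=\tau(\ell)\omega$, for $\ell$ in a finite maximal prefix-antichain $L$ with $\tau(\ell s)=\tau(\ell)s$ for all $\ell\in L$ and words $s$; this gives a surjective homomorphism $\pi$ onto Thompson's group $V$ whose kernel is $\mathrm{Sym}(Z)$, the group of finitely supported permutations of $Z$. *)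

From mathcomp Require Import all_boot.
Set Implicit Arguments. Unset Strict Implicit. Unset Printing Implicit Defensive.

(* Vertices of the rooted binary tree: finite words over {0,1} = seq bool;
   the children of x are x0 = rcons x false and x1 = rcons x true. *)
Definition word := seq bool.

(* Z = {0,1}^* ∪ {ζ}; Some w is the word w, None is the isolated vertex ζ. *)
Definition Zv := option word.

Definition cantor := nat -> bool.

Definition pcat (l : word) (w : cantor) : cantor :=
  fun n => if n < size l then nth false l n else w (n - size l).

(* τ(xb) = τ(x)b  (false if τ(x) = ζ, since then τ(x)b is undefined). *)
Definition child_ok (t : Zv -> Zv) (x : word) (b : bool) : Prop :=
  match t (Some x) with
  | Some y => t (Some (rcons x b)) = Some (rcons y b)
  | None => False
  end.

Definition in_QVt (t : Zv -> Zv) : Prop :=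
  bijective t /\
  exists F : seq word, forall x : word, x \notin F -> forall b, child_ok t x b.

Definition max_antichain (L : seq word) : Prop :=
  uniq L /\
  (forall l1 l2, l1 \in L -> l2 \in L -> l1 != l2 -> ~~ prefix l1 l2) /\
  (forall w : word, exists2 l, l \in L & prefix l w || prefix w l).

(* π(τ) = f : there is a finite maximal prefix-antichain L with
   τ(ℓs) = τ(ℓ)s for all ℓ ∈ L and words s, and f(ℓω) = τ(ℓ)ω. *)
Definition induces (t : Zv -> Zv) (f : cantor -> cantor) : Prop :=
  exists L : seq word, max_antichain L /\
    forall l, l \in L -> exists m : word,
      t (Some l) = Some m /\
      (forall s : word, t (Some (l ++ s)) = Some (m ++ s)) /\
      (forall w : cantor, f (pcat l w) =1 pcat m w).

Definition in_V (f : cantor -> cantor) : Prop :=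
  exists L R : seq word,
    [/\ max_antichain L, max_antichain R, size L = size R &
        forall i, i < size L -> forall w : cantor,
          f (pcat (nth [::] L i) w) =1 pcat (nth [::] R i) w].

(* Encode Z in Cantor space by ζ ↦ 0^∞ and x ↦ x1 0^∞: this is a bijection
   onto the eventually-zero sequences.  A prefix replacement f ∈ V changes
   only a finite prefix, so it permutes the eventually-zero sequences, and
   conjugating by the encoding gives a bijection s(f) of Z.  Functoriality of
   conjugation makes s a homomorphism, and on the cone below a leaf ℓ of the
   domain antichain s(f) acts as ℓs ↦ f(ℓ)s, so s(f) ∈ QV~ and π(s(f)) = f. *)

From Stdlib Require Import ClassicalEpsilon FunctionalExtensionality.
From mathcomp Require Import all_boot.
From mathcomp Require Import zify.

Lemma bij_inj_surj (A B : Type) (t : A -> B) :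
  injective t -> (forall y, exists x, t x = y) -> bijective t.
Proof.
move=> t_inj t_surj.
exists (fun y => proj1_sig (constructive_indefinite_description _ (t_surj y))).
  by move=> x; apply: t_inj; case: constructive_indefinite_description.
by move=> y; case: constructive_indefinite_description.
Qed.

Definition shift (n : nat) (u : cantor) : cantor := fun k => u (k + n).

Definition eventually_zero (u : cantor) : Prop :=
  exists N, forall n, N <= n -> u n = false.

Lemma pcat_cat l s w : pcat (l ++ s) w = pcat l (pcat s w).
Proof.
apply: functional_extensionality => n; rewrite /pcat size_cat nth_cat.
case: (ltnP n (size l)) => h; first by rewrite ltn_addr.
have -> : (n < size l + size s) = (n - size l < size s) by lia.
by case: ifP => // _; congr w; lia.
Qed.

Lemma shift_pcat l w : shift (size l) (pcat l w) = w.
Proof.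
by apply: functional_extensionality => n; rewrite /shift /pcat ltnNge leq_addl addnK.
Qed.

Lemma pcat_inj l : injective (pcat l).
Proof. by move=> w1 w2 E; rewrite -(shift_pcat l w1) E shift_pcat. Qed.

Lemma prefix_pcat {a b w1 w2} :
  pcat a w1 = pcat b w2 -> size a <= size b -> prefix a b.
Proof.
move=> E le_ab; rewrite prefixE; apply/eqP.
apply: (@eq_from_nth _ false) => [|n]; rewrite size_takel // => lt_na.
rewrite nth_take //.
by have := f_equal (fun u => u n) E; rewrite /pcat lt_na (leq_trans lt_na le_ab).
Qed.

Lemma eventually_zero_pcat l w : eventually_zero w -> eventually_zero (pcat l w).
Proof.
case=> N hN; exists (N + size l) => n le_n; rewrite /pcat.
by case: ltnP => h; [lia | apply: hN; lia].
Qed.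

Lemma eventually_zero_shift n u : eventually_zero u -> eventually_zero (shift n u).
Proof. by case=> N hN; exists N => k le_k; apply: hN; lia. Qed.

Definition enc (z : Zv) : cantor :=
  if z is Some x then pcat (rcons x true) (fun=> false) else fun=> false.

Lemma enc_some_size x : enc (Some x) (size x) = true.
Proof. by rewrite /= /pcat size_rcons ltnSn nth_rcons ltnn eqxx. Qed.

Lemma enc_some_large {x n} : size x < n -> enc (Some x) n = false.
Proof. by move=> h; rewrite /= /pcat size_rcons ltnNge h. Qed.

Lemma enc_some_cat l s : enc (Some (l ++ s)) = pcat l (enc (Some s)).
Proof. by rewrite /= rcons_cat pcat_cat. Qed.

Lemma enc_inj : injective enc.
Proof.
move=> [x|] [y|] E; [| by have := enc_some_size x; rewrite E
                     | by have := enc_some_size y; rewrite -E | by []].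
case: (ltngtP (size x) (size y)) => [lt_xy|lt_yx|eq_xy].
- by have := enc_some_large lt_xy; rewrite E enc_some_size.
- by have := enc_some_large lt_yx; rewrite -E enc_some_size.
congr Some; apply: (@eq_from_nth _ false) => // n lt_nx.
have := f_equal (fun u => u n) E; rewrite /= /pcat !size_rcons !nth_rcons -eq_xy.
by rewrite lt_nx ltnS ltnW.
Qed.

Lemma eventually_zero_enc z : eventually_zero (enc z).
Proof.
case: z => [x|]; last by exists 0.
by exists (size x).+1 => n; apply: enc_some_large.
Qed.

(* If u vanishes beyond N, then either u N = 1 and u = (u 0 ... u (N-1)) 1 0^∞,
   or u already vanishes from N on. *)
Lemma enc_onto u : eventually_zero u -> exists z, enc z = u.
Proof.
case=> N; elim: N u => [|N IH] u hu.
  by exists None; apply: functional_extensionality => n; rewrite hu.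
case uN: (u N); last first.
  by apply: IH => n le_Nn; case: (ltngtP n N) => h; [lia | apply: hu | rewrite h].
exists (Some (mkseq u N)); apply: functional_extensionality => n.
rewrite /= /pcat size_rcons size_mkseq nth_rcons size_mkseq.
case: (ltngtP n N) => [lt_nN|lt_Nn|->]; last by rewrite ltnSn.
  by rewrite ltnS ltnW // nth_mkseq.
by rewrite ltnNge lt_Nn hu // ltnW.
Qed.

Lemma max_antichain_cover {L} u : max_antichain L ->
  exists2 i, i < size L &
    u = pcat (nth [::] L i) (shift (size (nth [::] L i)) u).
Proof.
case=> _ [_ covL].
pose m := \max_(l <- L) size l.
have le_m l : l \in L -> size l <= m by move=> lL; apply: leq_bigmax_seq.
pose w := mkseq u m.
have [l lL prefix_lw] := covL w.
have pl : prefix l w.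
  case/orP: prefix_lw => // /prefixP [t wt].
  have := le_m l lL; rewrite wt size_cat size_mkseq => le_t.
  have /nilP t0 : nilp t by rewrite /nilp; lia.
  by rewrite t0 cats0 prefix_refl.
exists (index l L); first by rewrite index_mem.
rewrite nth_index //; apply: functional_extensionality => n; rewrite /pcat /shift.
case: ltnP => [lt_nl|]; last by move=> le_ln; rewrite subnK.
case/prefixP: pl => t wt.
have <- : nth false w n = u n by rewrite nth_mkseq // (leq_trans lt_nl) ?le_m.
by rewrite wt nth_cat lt_nl.
Qed.

Definition proper_prefixes (L : seq word) : seq word :=
  [seq take k l | l <- L, k <- iota 0 (size l)].

Lemma max_antichain_extends {L x} : max_antichain L -> x \notin proper_prefixes L ->
  exists2 i, i < size L & exists s, x = nth [::] L i ++ s.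
Proof.
case=> _ [_ covL] x_out.
have [l lL] := covL x; case/orP=> /prefixP [t lt].
  by exists (index l L); [rewrite index_mem | exists t; rewrite nth_index // lt].
case: t lt => [|b t] lt.
  by exists (index l L); [rewrite index_mem | exists [::]; rewrite nth_index // lt !cats0].
case/negP: x_out; rewrite -(take_size_cat (b :: t) (erefl (size x))) -lt.
apply: (allpairs_f_dep (fun l k => take k l) lL).
by rewrite mem_iota lt size_cat /= addnS ltnS leq_addr.
Qed.

Definition enc_conj (f : cantor -> cantor) (z : Zv) : Zv :=
  epsilon (inhabits z) (fun z' => enc z' = f (enc z)).

Lemma enc_conjE {f z} : eventually_zero (f (enc z)) -> enc (enc_conj f z) = f (enc z).
Proof.
move=> /enc_onto ex_z'.
exact: (epsilon_spec (inhabits z) (fun z' => enc z' = f (enc z))).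
Qed.

Lemma enc_conj_comp f g :
  (forall z, eventually_zero (f (enc z))) -> (forall z, eventually_zero (g (enc z))) ->
  enc_conj (f \o g) =1 enc_conj f \o enc_conj g.
Proof.
move=> f_ez g_ez z; apply: enc_inj.
have fg_enc : enc (enc_conj f (enc_conj g z)) = f (g (enc z)).
  by rewrite (enc_conjE (f_ez _)) (enc_conjE (g_ez _)).
by rewrite /= fg_enc; apply: enc_conjE; rewrite /= -fg_enc; apply: eventually_zero_enc.
Qed.

Section PrefixReplacement.

Variables (f : cantor -> cantor) (L R : seq word).
Hypotheses (antiL : max_antichain L) (antiR : max_antichain R).
Hypothesis size_LR : size L = size R.
Hypothesis f_replace : forall i, i < size L -> forall w : cantor,
  f (pcat (nth [::] L i) w) =1 pcat (nth [::] R i) w.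

Lemma replaceE i w : i < size L -> f (pcat (nth [::] L i) w) = pcat (nth [::] R i) w.
Proof. by move=> lt_iL; apply: functional_extensionality; apply: f_replace. Qed.

Lemma replace_inj : injective f.
Proof.
move=> u1 u2.
have [i lt_iL ->] := max_antichain_cover u1 antiL.
have [j lt_jL ->] := max_antichain_cover u2 antiL.
rewrite !replaceE //; set w1 := shift _ u1; set w2 := shift _ u2 => E.
suff eq_ij : i = j by move: E; rewrite eq_ij => /pcat_inj ->.
have [lt_iR lt_jR] : i < size R /\ j < size R by rewrite -size_LR.
case: antiR => uniqR [antichainR _].
apply/eqP; rewrite -(nth_uniq [::] lt_iR lt_jR uniqR); apply: contraT => neq_ij.
have [iR jR] := (mem_nth [::] lt_iR, mem_nth [::] lt_jR).
case: (leqP (size (nth [::] R i)) (size (nth [::] R j))) => [le_ij|/ltnW le_ji].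
  by move: (antichainR _ _ iR jR neq_ij); rewrite (prefix_pcat E le_ij).
rewrite eq_sym in neq_ij.
by move: (antichainR _ _ jR iR neq_ij); rewrite (prefix_pcat (esym E) le_ji).
Qed.

Lemma eventually_zero_replace u : eventually_zero u -> eventually_zero (f u).
Proof.
have [i lt_iL ->] := max_antichain_cover u antiL.
rewrite replaceE // => /(eventually_zero_shift (size (nth [::] L i))).
by rewrite shift_pcat; apply: eventually_zero_pcat.
Qed.

Lemma replace_onto {v} : eventually_zero v -> exists2 u, eventually_zero u & f u = v.
Proof.
have [i lt_iR ->] := max_antichain_cover v antiR.
set w := shift _ v => /(eventually_zero_shift (size (nth [::] R i))).
rewrite shift_pcat => ez_w; have lt_iL : i < size L by rewrite size_LR.
by exists (pcat (nth [::] L i) w); [apply: eventually_zero_pcat | rewrite replaceE].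
Qed.

Lemma enc_conj_replaceE z : enc (enc_conj f z) = f (enc z).
Proof. exact/enc_conjE/eventually_zero_replace/eventually_zero_enc. Qed.

Lemma enc_conj_bij : bijective (enc_conj f).
Proof.
apply: bij_inj_surj => [z1 z2 E|y].
  by apply/enc_inj/replace_inj; rewrite -!enc_conj_replaceE E.
have [u /enc_onto [z <-] fu] := replace_onto (eventually_zero_enc y).
by exists z; apply: enc_inj; rewrite enc_conj_replaceE.
Qed.

Lemma enc_conj_cone i s :
  i < size L -> enc_conj f (Some (nth [::] L i ++ s)) = Some (nth [::] R i ++ s).
Proof. by move=> lt_iL; apply: enc_inj; rewrite enc_conj_replaceE !enc_some_cat replaceE. Qed.

Lemma enc_conj_in_QVt : in_QVt (enc_conj f).
Proof.
split; first exact: enc_conj_bij.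
exists (proper_prefixes L) => x /(max_antichain_extends antiL) [i lt_iL [s ->]] b.
by rewrite /child_ok -cats1 -catA !enc_conj_cone // rcons_cat cats1.
Qed.

Lemma enc_conj_induces : induces (enc_conj f) f.
Proof.
exists L; split=> // l lL.
have := nth_index [::] lL; have := index_mem l L; rewrite lL.
move: (index l L) => i lt_iL <-; exists (nth [::] R i).
split; first by rewrite -[nth _ L _]cats0 enc_conj_cone // cats0.
by split=> [s|]; [apply: enc_conj_cone | apply: f_replace].
Qed.

End PrefixReplacement.

Lemma in_V_eventually_zero f z : in_V f -> eventually_zero (f (enc z)).
Proof.
case=> L [R [antiL _ _ f_replace]].
exact: (@eventually_zero_replace f L R antiL f_replace _ (eventually_zero_enc z)).
Qed.

Theorem lemma2p3 :
  exists s : (cantor -> cantor) -> (Zv -> Zv),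
    (forall f, in_V f -> in_QVt (s f) /\ induces (s f) f) /\
    (forall f g, in_V f -> in_V g -> f =1 g -> s f =1 s g) /\
    (forall f g, in_V f -> in_V g -> s (f \o g) =1 s f \o s g).
Proof.
exists enc_conj; split; [|split].
- move=> f [L [R [antiL antiR size_LR f_replace]]].
  by split; [apply: (@enc_conj_in_QVt f L R) | apply: (@enc_conj_induces f L R)].
- by move=> f g _ _ /functional_extensionality ->.
- by move=> f g Vf Vg; apply: enc_conj_comp => z; apply: in_V_eventually_zero.
Qed.
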